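(* Let $\mathrm T=(T,\mathrm D)$ be a random labeled plane tree and let $\mathrm T^{\mathrm{sym}}$ be its symmetrization. Then for any constants $k,K,M$, \begin{align*} &\mathbb P\Big(\sup_{|i-j|\le k}|\ell_{\mathrm T}(\theta_T(i))-\ell_{\mathrm T}(\theta_T(j))|>M\Big)\\ &\le\mathbb P\Big(\sup_{|i-j|\le k}\mathrm{dist}(\theta_T(i),\theta_T(j))>K\Big)+\mathbb P\Big(\sup_{v,w\in V(\mathrm T^{\mathrm{sym}}):\,\mathrm{dist}(v,w)\le K}|\ell_{\mathrm T^{\mathrm{sym}}}(v)-\ell_{\mathrm T^{\mathrm{sym}}}(w)|>M\Big), \end{align*} where $i,j$ range over $\{0,\dots,2|T|-2\}$.
   Context: Plane trees are rooted and encoded by Ulam–Harris words (possibly with vertex types). A labeled plane tree $(t,\mathrm d)$ has real displacements on edges; $\ell_{\mathrm t}(v)$ is the sum of displacements on the path from the root to $v$, and $\mathrm{dist}$ is the graph distance in the tree. The contour exploration $\theta_t:\{0,\dots,2|t|-2\}\to V(t)$ is defined by $\theta_t(0)=\emptyset$ and $\theta_t(i)$ equal to the lexicographically first child of $\theta_t(i-1)$ not among $\theta_t(0),\dots,\theta_t(i-1)$, or the parent of $\theta_t(i-1)$ if there is no such child. For $\sigma=(\sigma_v,v\in V(t))$ with $\sigma_v$ a permutation of the children of $v$, $\sigma(t,\mathrm d)$ reorders the children of each $v$ according to $\sigma_v$ with displacements following their edges; the symmetrization of a random labeled tree $(T,\mathrm D)$ is $\sigma(T,\mathrm D)$ with $\sigma$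 chosen uniformly among all such vectors, conditionally on $(T,\mathrm D)$. *)

From HB Require Import structures.
From mathcomp Require Import all_boot all_order all_algebra.
From mathcomp Require Import all_classical all_reals all_analysis.
Set Implicit Arguments. Unset Strict Implicit. Unset Printing Implicit Defensive.
Import Order.TTheory GRing.Theory Num.Theory.
Local Open Scope ring_scope.

(* A labeled plane tree: each vertex has an ordered list of children, and the
   edge to each child carries a real displacement. Vertices are addressed by
   Ulam--Harris words (seq nat): [::] is the root, rcons v i is the i-th child
   (0-based) of v. *)
Inductive ltree (R : Type) := LNode of seq (R * ltree R).
Arguments LNode {R}.

Section LTree.
Variable R : realType.
Local Notation lt := (ltree R).

Definition leaf : lt := LNode [::].

Definition kids (t : lt) : seq (R * lt) := let: LNode cs := t in cs.

Fixpoint subtree (t : lt) (w : seq nat) : lt :=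
  match w with
  | [::] => t
  | i :: w' => subtree (nth (0, leaf) (kids t) i).2 w'
  end.

Definition nkids (t : lt) (v : seq nat) : nat := size (kids (subtree t v)).

Fixpoint verts (t : lt) : seq (seq nat) :=
  let: LNode cs := t in
  [::] :: (fix aux (i : nat) (cs : seq (R * lt)) : seq (seq nat) :=
             match cs with
             | [::] => [::]
             | (_, c) :: cs' => map (cons i) (verts c) ++ aux i.+1 cs'
             end) 0%N cs.

Definition tsize (t : lt) : nat := size (verts t).

Fixpoint lab (t : lt) (w : seq nat) : R :=
  match w with
  | [::] => 0
  | i :: w' => let c := nth (0, leaf) (kids t) i in c.1 + lab c.2 w'
  end.

(* graph distance in the tree between Ulam--Harris words v and w:
   |v| + |w| - 2 |v /\ w|, where v /\ w is their longest common prefix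
   (their last common ancestor). *)
Fixpoint lcp_size (v w : seq nat) : nat :=
  match v, w with
  | a :: v', b :: w' => if a == b then (lcp_size v' w').+1 else 0%N
  | _, _ => 0%N
  end.
Definition dist (v w : seq nat) : nat :=
  (size v + size w - 2 * lcp_size v w)%N.

Definition parent (v : seq nat) : seq nat := take (size v).-1 v.

(* contour exploration: cvisited t n = [:: theta(n); theta(n-1); ...; theta(0)].
   theta(0) = root; theta(n+1) = the first (in lexicographic, i.e. index, order)
   child of theta(n) not among theta(0..n), or the parent of theta(n). *)
Fixpoint cvisited (t : lt) (n : nat) : seq (seq nat) :=
  match n with
  | 0%N => [:: [::]]
  | n'.+1 =>
      let s := cvisited t n' in
      let v := head [::] s in
      let k := nkids t v in
      let j := find (fun i => rcons v i \notin s) (iota 0 k) in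
      (if (j < k)%N then rcons v j else parent v) :: s
  end.

Definition theta (t : lt) (n : nat) : seq nat := head [::] (cvisited t n).

(* sigma(t,d): sigma assigns to each vertex v a list sigma v, which should be a
   permutation of [:: 0; ...; k_v - 1]; the new j-th child of v is the old
   (sigma v)_j-th child, carrying its displacement and (reordered) subtree. *)
Fixpoint sigma_apply (sigma : seq nat -> seq nat) (v : seq nat) (t : lt) : lt :=
  let: LNode cs := t in
  let cs' := (fix aux (i : nat) (cs : seq (R * lt)) : seq (R * lt) :=
                match cs with
                | [::] => [::]
                | (d, c) :: cs'' => (d, sigma_apply sigma (rcons v i) c) :: aux i.+1 cs''
                end) 0%N cs in
  LNode [seq nth (0, leaf) cs' j | j <- sigma v].

(* All vectors (sigma_v, v in V(t)) of permutations of children, listed once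
   each: a vector is encoded by the list of the sigma_v along verts t. *)
Definition sigma_vectors (t : lt) : seq (seq (seq nat)) :=
  foldr (fun v acc => [seq p :: a | p <- permutations (iota 0 (nkids t v)), a <- acc])
        [:: [::]] (verts t).

Definition sigma_of (t : lt) (ps : seq (seq nat)) : seq nat -> seq nat :=
  fun w => nth [::] ps (index w (verts t)).

(* Conditional probability, given (T,D) = t, that the symmetrization satisfies
   the event E: sigma uniform among all vectors. *)
Definition sym_prob (E : lt -> bool) (t : lt) : R :=
  (size (sigma_vectors t))%:R^-1 *
  \sum_(ps <- sigma_vectors t) (E (sigma_apply (sigma_of t ps) [::] t))%:R.

Definition cidx (t : lt) : seq nat := iota 0 (2 * tsize t).-1.

Definition ev_label_contour (k M : R) (t : lt) : bool :=
  has (fun i => has (fun j =>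
         (`|i%:R - j%:R| <= k) && (`|lab t (theta t i) - lab t (theta t j)| > M))
       (cidx t)) (cidx t).

Definition ev_dist_contour (k K : R) (t : lt) : bool :=
  has (fun i => has (fun j =>
         (`|i%:R - j%:R| <= k) && ((dist (theta t i) (theta t j))%:R > K))
       (cidx t)) (cidx t).

Definition ev_label_dist (K M : R) (t : lt) : bool :=
  has (fun v => has (fun w =>
         ((dist v w)%:R <= K) && (`|lab t v - lab t w| > M))
       (verts t)) (verts t).

End LTree.

From HB Require Import structures.
From mathcomp Require Import all_boot all_order all_algebra.
From mathcomp Require Import all_classical all_reals all_analysis.
From mathcomp Require Import zify.
Import Order.TTheory GRing.Theory Num.Theory.
Set Implicit Arguments. Unset Strict Implicit. Unset Printing Implicit Defensive.
Local Open Scope ring_scope.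

(* Reordering the children of every vertex by sigma sends each vertex u of t
   to a vertex sigma(u) of sigma(t) carrying the same label, and preserves the
   graph distance, since it preserves depths and longest common prefixes.
   Hence, if the contour of t visits two vertices at distance at most K whose
   labels differ by more than M, then every reordering sigma(t) contains two
   such vertices. So where the first event holds and the second fails, the
   conditional probability of the third is 1, and
   P(first) <= P(second) + P(first, not second) <= P(second) + E[sym_prob]. *)

Section Reordering.
Variable R : realType.
Local Notation lt := (ltree R).
Local Notation kid t i := (nth (0, leaf R) (kids t) i).

Fixpoint forest_verts (i : nat) (cs : seq (R * lt)) : seq (seq nat) :=
  match cs with
  | [::] => [::]
  | (_, c) :: cs' => map (cons i) (verts c) ++ forest_verts i.+1 cs'
  end.

Lemma verts_LNode cs : verts (LNode cs) = [::] :: forest_verts 0 cs.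
Proof. by []. Qed.

Fixpoint sigma_forest (sigma : seq nat -> seq nat) (v : seq nat) (i : nat)
    (cs : seq (R * lt)) : seq (R * lt) :=
  match cs with
  | [::] => [::]
  | (d, c) :: cs' => (d, sigma_apply sigma (rcons v i) c) :: sigma_forest sigma v i.+1 cs'
  end.

Lemma kids_sigma_apply sigma v t : kids (sigma_apply sigma v t) =
  [seq nth (0, leaf R) (sigma_forest sigma v 0 (kids t)) j | j <- sigma v].
Proof.
case: t => cs /=; apply: eq_map => j; congr nth.
by elim: cs 0%N => [|[d c] cs IH] n //=; rewrite IH.
Qed.

Lemma nth_sigma_forest sigma v n cs i : (i < size cs)%N ->
  nth (0, leaf R) (sigma_forest sigma v n cs) i =
  ((nth (0, leaf R) cs i).1, sigma_apply sigma (rcons v (n + i)%N) (nth (0, leaf R) cs i).2).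
Proof.
elim: cs n i => [|[d c] cs IH] n [|i] //= hi; first by rewrite addn0.
by rewrite IH // addSnnS.
Qed.

Fixpoint is_vert (t : lt) (u : seq nat) : bool :=
  if u is i :: u' then (i < size (kids t))%N && is_vert (kid t i).2 u' else true.

Lemma mem_forest_verts n cs i u : (i :: u \in forest_verts n cs) =
  [&& (n <= i)%N, (i - n < size cs)%N & u \in verts (nth (0, leaf R) cs (i - n)).2].
Proof.
elim: cs n => [|[d c] cs IH] n /=.
  by rewrite in_nil; case: (n <= i)%N; case: (i - n)%N.
have mem_cons_n : (i :: u \in map (cons n) (verts c)) = (i == n) && (u \in verts c).
  by apply/mapP/andP => [[x hx [-> ->]]|[/eqP -> hu]]; [split | exists u].
rewrite mem_cat IH mem_cons_n; case: (ltngtP i n) => h //=.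
  by have -> : (i - n = (i - n.+1).+1)%N by lia.
by rewrite h subnn /= orbF.
Qed.

Lemma mem_verts t u : (u \in verts t) = is_vert t u.
Proof.
elim: u t => [|i u IH] [cs]; first by rewrite verts_LNode inE eqxx.
by rewrite verts_LNode inE /= mem_forest_verts subn0 IH.
Qed.

Lemma is_vert_rcons t v j : is_vert t (rcons v j) = is_vert t v && (j < nkids t v)%N.
Proof.
by elim: v t => [|a v IH] t /=; rewrite ?andbT // IH /nkids /= andbA.
Qed.

Lemma is_vert_take t v n : is_vert t v -> is_vert t (take n v).
Proof.
by elim: v t n => [|a v IH] t [|n] //= /andP[-> /IH ->].
Qed.

Lemma all_is_vert_cvisited t n : all (is_vert t) (cvisited t n).
Proof.
elim: n => [|n IH] //=; rewrite IH andbT.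
have head_vert : is_vert t (head [::] (cvisited t n)).
  by move: IH; case: (cvisited t n) => //= x s /andP[].
by case: ifP => hj; [rewrite is_vert_rcons head_vert hj | exact: is_vert_take].
Qed.

Lemma is_vert_theta t n : is_vert t (theta t n).
Proof.
by rewrite /theta; have := all_is_vert_cvisited t n; case: cvisited => //= x s /andP[].
Qed.

(* [sigma] is read at absolute addresses, while [sigma_apply sigma v] acts on a
   subtree rooted at address [v]. *)
Definition perm_on_kids (sigma : seq nat -> seq nat) (v : seq nat) (t : lt) :=
  forall u, is_vert t u -> perm_eq (sigma (v ++ u)) (iota 0 (size (kids (subtree t u)))).

Section PermOnKids.
Variables (sigma : seq nat -> seq nat) (v : seq nat) (t : lt).
Hypothesis sigma_perm : perm_on_kids sigma v t.

Lemma mem_sigma_kid i : (i < size (kids t))%N -> i \in sigma v.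
Proof.
move=> hi; have := sigma_perm (u := [::]) isT.
by rewrite cats0 => /perm_mem ->; rewrite mem_iota.
Qed.

Lemma perm_on_kids_child i : (i < size (kids t))%N ->
  perm_on_kids sigma (rcons v i) (kid t i).2.
Proof.
by move=> hi u hu; rewrite cat_rcons; apply: (sigma_perm (u := i :: u)) => /=; rewrite hi.
Qed.

Lemma index_sigma_lt_kids i : (i < size (kids t))%N ->
  (index i (sigma v) < size (kids (sigma_apply sigma v t)))%N.
Proof.
by move=> /mem_sigma_kid hi; rewrite kids_sigma_apply size_map index_mem.
Qed.

Lemma kid_sigma_apply i : (i < size (kids t))%N ->
  kid (sigma_apply sigma v t) (index i (sigma v)) =
  ((kid t i).1, sigma_apply sigma (rcons v i) (kid t i).2).
Proof.
move=> hi; rewrite kids_sigma_apply (nth_map 0%N) ?index_mem ?mem_sigma_kid //.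
by rewrite nth_index ?mem_sigma_kid // nth_sigma_forest.
Qed.

End PermOnKids.

Fixpoint sigma_vert (sigma : seq nat -> seq nat) v (t : lt) u : seq nat :=
  if u is i :: u' then index i (sigma v) :: sigma_vert sigma (rcons v i) (kid t i).2 u'
  else [::].

Section SigmaVert.
Variable sigma : seq nat -> seq nat.

Lemma size_sigma_vert u v t : size (sigma_vert sigma v t u) = size u.
Proof. by elim: u v t => //= i u IH v t; rewrite IH. Qed.

Lemma is_vert_sigma_vert u v t : perm_on_kids sigma v t -> is_vert t u ->
  is_vert (sigma_apply sigma v t) (sigma_vert sigma v t u).
Proof.
elim: u v t => [|i u IH] v t sigma_perm //= /andP[hi hu].
rewrite index_sigma_lt_kids // kid_sigma_apply //=.
exact: IH (perm_on_kids_child sigma_perm hi) hu.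
Qed.

Lemma lab_sigma_vert u v t : perm_on_kids sigma v t -> is_vert t u ->
  lab (sigma_apply sigma v t) (sigma_vert sigma v t u) = lab t u.
Proof.
elim: u v t => [|i u IH] v t sigma_perm //= /andP[hi hu].
by rewrite kid_sigma_apply //= IH //; exact: perm_on_kids_child.
Qed.

Lemma lcp_size_sigma_vert u1 u2 v t : perm_on_kids sigma v t ->
  is_vert t u1 -> is_vert t u2 ->
  lcp_size (sigma_vert sigma v t u1) (sigma_vert sigma v t u2) = lcp_size u1 u2.
Proof.
elim: u1 u2 v t => [|i u1 IH] [|j u2] v t sigma_perm //= /andP[hi hu1] /andP[hj hu2].
case: (eqVneq i j) hu2 => [<-|nij] hu2.
  by rewrite !eqxx IH //; exact: perm_on_kids_child.
suff /negbTE -> : index i (sigma v) != index j (sigma v) by [].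
apply: contra nij => /eqP eq_index.
by rewrite -(nth_index 0%N (mem_sigma_kid sigma_perm hi)) eq_index
           nth_index // (mem_sigma_kid sigma_perm hj).
Qed.

Lemma dist_sigma_vert u1 u2 v t : perm_on_kids sigma v t ->
  is_vert t u1 -> is_vert t u2 ->
  dist (sigma_vert sigma v t u1) (sigma_vert sigma v t u2) = dist u1 u2.
Proof. by move=> *; rewrite /dist lcp_size_sigma_vert // !size_sigma_vert. Qed.

End SigmaVert.

Section PermVectors.
Variables (A : eqType) (n : A -> nat).

Let perm_vectors (L : seq A) : seq (seq (seq nat)) :=
  foldr (fun v acc => [seq p :: a | p <- permutations (iota 0 (n v)), a <- acc])
        [:: [::]] L.

Lemma mem_perm_vectors L ps : ps \in perm_vectors L ->
  forall x, x \in L -> perm_eq (nth [::] ps (index x L)) (iota 0 (n x)).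
Proof.
elim: L ps => [|y L IH] ps //= /allpairsP[[p a] [/= hp ha ->]] x.
rewrite inE; case: (eqVneq y x) => [<- _|_] /=; first by rewrite -mem_permutations.
exact: IH.
Qed.

Lemma perm_vectors_gt0 L : (0 < size (perm_vectors L))%N.
Proof.
elim: L => //= y L IH; rewrite size_allpairs muln_gt0 IH andbT.
have : iota 0 (n y) \in permutations (iota 0 (n y)) by rewrite mem_permutations.
by case: permutations.
Qed.

End PermVectors.

Lemma perm_on_kids_sigma_of t ps : ps \in sigma_vectors t ->
  perm_on_kids (sigma_of t ps) [::] t.
Proof.
by move=> hps u hu; apply: (mem_perm_vectors hps); rewrite mem_verts.
Qed.

Lemma sym_prob_ge0 (E : lt -> bool) t : 0 <= sym_prob E t.
Proof.
by rewrite mulr_ge0 ?invr_ge0 ?ler0n ?sumr_ge0 // => ps _; rewrite ler0n.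
Qed.

Lemma sym_prob_eq1 (E : lt -> bool) t :
  (forall ps, ps \in sigma_vectors t -> E (sigma_apply (sigma_of t ps) [::] t)) ->
  sym_prob E t = 1.
Proof.
move=> E_all; rewrite /sym_prob -natr_sum (eq_big_seq (fun _ => 1%N)); last first.
  by move=> ps /E_all ->.
by rewrite sum1_size mulVf // pnatr_eq0 -lt0n perm_vectors_gt0.
Qed.

Lemma sym_prob_label_dist_eq1 (k K M : R) (t : lt) :
  ev_label_contour k M t -> ~~ ev_dist_contour k K t ->
  sym_prob (ev_label_dist K M) t = 1.
Proof.
move=> /hasP[i hi /hasP[j hj /andP[hk hM]]] /hasPn /(_ i hi) /hasPn /(_ j hj).
rewrite hk /= -leNgt => hK; apply: sym_prob_eq1 => ps /perm_on_kids_sigma_of sigma_perm.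
have [vi vj] := (is_vert_theta t i, is_vert_theta t j).
apply/hasP; exists (sigma_vert (sigma_of t ps) [::] t (theta t i));
  first by rewrite mem_verts is_vert_sigma_vert.
apply/hasP; exists (sigma_vert (sigma_of t ps) [::] t (theta t j));
  first by rewrite mem_verts is_vert_sigma_vert.
by rewrite !lab_sigma_vert // dist_sigma_vert // hK hM.
Qed.

End Reordering.

Local Open Scope classical_set_scope.

Lemma measure_le_add_integral (R : realType) (d : measure_display) (X : measurableType d)
    (mu : {measure set X -> \bar R}) (A B : set X) (f : X -> R) :
  measurable A -> measurable B -> measurable_fun setT f ->
  (forall x, 0 <= f x) -> (forall x, A x -> ~ B x -> 1 <= f x) ->
  (mu A <= mu B + \int[mu]_x (f x)%:E)%E.
Proof.
move=> mA mB mf f_ge0 f_ge1.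
have mAB : measurable (A `\` B) by exact: measurableD.
apply: (@le_trans _ _ (mu (B `|` (A `\` B)))).
  apply: le_measure; rewrite ?inE //; first exact: measurableU.
  by move=> x Ax; have [Bx|nBx] := pselect (B x); [left | right].
apply: le_trans (measureU2 _ mB mAB) _; apply: leeD2l.
have := integral_indic mu measurableT mAB; rewrite setIT => indic_AB.
apply: (@le_trans _ _ (\int[mu]_x (\1_(A `\` B) x)%:E)%E); first by rewrite indic_AB.
apply: ge0_le_integral => //.
- by apply/measurable_realfun.measurable_EFinP; exact: measurable_realfun.measurable_indic.
- exact/measurable_realfun.measurable_EFinP.
- move=> x _; rewrite lee_fin /indic; case: (boolP (x \in A `\` B)) => [|_].
    by rewrite inE => -[Ax nBx]; exact: f_ge1.
  exact: f_ge0.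
Qed.

Theorem lemma3p2 (R : realType) (d : measure_display) (Omega : measurableType d)
  (P : probability Omega R) (T : Omega -> ltree R) (k K M : R)
  (mA : measurable [set w | ev_label_contour k M (T w)])
  (mB : measurable [set w | ev_dist_contour k K (T w)])
  (mC : measurable_fun setT (fun w => sym_prob (ev_label_dist K M) (T w))) :
  (P [set w | ev_label_contour k M (T w)] <=
   P [set w | ev_dist_contour k K (T w)]
   + \int[P]_w (sym_prob (ev_label_dist K M) (T w))%:E)%E.
Proof.
apply: (measure_le_add_integral _ mA mB mC) => [w|w A_w not_B_w].
  exact: sym_prob_ge0.
by rewrite (@sym_prob_label_dist_eq1 _ k) //; exact/negP.
Qed.
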